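(* In a commutative A-loop $Q$, the set $K_1(Q)=\{x^2 : x\in Q\}$ is a normal subloop of $Q$.
   Context: A loop is a set with a binary operation and neutral element $1$ in which all left and right translations are bijections; $\mathrm{Inn}(Q)$ is the stabilizer of $1$ in the group generated by all translations. A commutative A-loop is a commutative loop all of whose inner mappings are automorphisms. A normal subloop is a subloop invariant under all inner mappings (equivalently, the kernel of a homomorphism). *)

From mathcomp Require Import ssreflect ssrfun ssrbool.
Set Implicit Arguments. Unset Strict Implicit.

Section Loops.
Variables (T : Type) (mul : T -> T -> T) (one : T).

Definition is_loop : Prop :=
  (forall x, mul one x = x) /\ (forall x, mul x one = x) /\
  (forall x, bijective (mul x)) /\ (forall x, bijective (fun y => mul y x)).

Definition commutative_loop : Prop :=
  is_loop /\ (forall x y, mul x y = mul y x).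

Inductive mlt : (T -> T) -> Prop :=
| mlt_L x : mlt (mul x)
| mlt_R x : mlt (fun y => mul y x)
| mlt_id : mlt id
| mlt_comp f g : mlt f -> mlt g -> mlt (f \o g)
| mlt_inv f g : mlt f -> cancel f g -> cancel g f -> mlt g.

Definition inner_mapping (f : T -> T) : Prop := mlt f /\ f one = one.

Definition loop_automorphism (f : T -> T) : Prop :=
  bijective f /\ (forall x y, f (mul x y) = mul (f x) (f y)).

Definition commutative_A_loop : Prop :=
  commutative_loop /\ (forall f, inner_mapping f -> loop_automorphism f).

(* Subloop: contains 1, closed under multiplication and under both divisions. *)
Definition subloop (S : T -> Prop) : Prop :=
  S one /\ (forall a b, S a -> S b -> S (mul a b)) /\
  (forall a b x, S a -> S b -> mul a x = b -> S x) /\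
  (forall a b x, S a -> S b -> mul x a = b -> S x).

Definition normal_subloop (S : T -> Prop) : Prop :=
  subloop S /\ (forall f x, inner_mapping f -> S x -> S (f x)).

Definition K1 : T -> Prop := fun z => exists x, z = mul x x.

End Loops.

(* Inner mappings of a commutative A-loop are automorphisms, hence map squares
   to squares, and every [L_a L_b] factors as [L_(ab) h] with [h] inner.  This
   turns [(xx)(yy)] into [x(x(zz))], and [(xx)\(yy)] into the image under an
   inner map of some [x'(x'(ss))], so everything hinges on [x(x(yy))] being a
   square.  For that, two more factorisations give [x(yy) = (xy) b'], with [b']
   the inverse of [(xy)\x], and then [x((xy) b') = (x b')(x b')]. *)
From mathcomp Require Import ssreflect ssrfun ssrbool.

Set Implicit Arguments.
Unset Strict Implicit.
Unset Printing Implicit Defensive.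

Section Loop.

Variables (T : Type) (mul : T -> T -> T) (one : T).
Hypothesis Q : is_loop mul one.
Local Notation "x * y" := (mul x y).

Lemma mul1q x : one * x = x.
Proof. by case: Q. Qed.

Lemma mulq1 x : x * one = x.
Proof. by case: Q => _ []. Qed.

Lemma mulqI x : injective (mul x).
Proof. by case: Q => _ [_ [/(_ x) /bij_inj]]. Qed.

Lemma mulq_surj x z : exists y, x * y = z.
Proof. by case: Q => _ [_ [/(_ x) [g _ gK] _]]; exists (g z); rewrite gK. Qed.

Lemma mlt_factor_inner f :
  mlt mul f -> exists h, inner_mapping mul one h /\ forall y, f y = f one * h y.
Proof.
move=> mf; case: Q => _ [_ [/(_ (f one)) [g Lg gL] _]].
exists (g \o f); split=> [|y]; last by rewrite /= gL.
split; first by apply: mlt_comp => //; exact: mlt_inv (mlt_L mul (f one)) Lg gL.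
by rewrite /= -{1}(mulq1 (f one)) Lg.
Qed.

Lemma mulq_mulq_factor a b :
  exists h, inner_mapping mul one h /\ forall y, a * (b * y) = (a * b) * h y.
Proof.
have [|h [inn_h fact_h]] := @mlt_factor_inner (mul a \o mul b).
  by apply: mlt_comp; apply: mlt_L.
by exists h; split=> // y; move: (fact_h y) => /=; rewrite mulq1.
Qed.

End Loop.

Arguments mulqI {T mul one} Q x [x1 x2].

Lemma K1_morph (T : Type) (mul : T -> T -> T) f x :
  (forall a b, f (mul a b) = mul (f a) (f b)) -> K1 mul x -> K1 mul (f x).
Proof. by move=> f_morph [t ->]; exists (f t). Qed.

Section CommutativeALoop.

Variables (T : Type) (mul : T -> T -> T) (one : T).
Hypothesis cAQ : commutative_A_loop mul one.
Local Notation "x * y" := (mul x y).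
Local Notation inner := (inner_mapping mul one).

Let Q : is_loop mul one := cAQ.1.1.

Lemma mulqC x y : x * y = y * x.
Proof. by case: cAQ => [[_ ->]]. Qed.

Lemma inner_morph f : inner f -> forall x y, f (x * y) = f x * f y.
Proof. by case: cAQ => _ /[apply] -[]. Qed.

Lemma inner_surj f y : inner f -> exists x, f x = y.
Proof. by case: cAQ => _ /[apply] -[[g _ gK] _]; exists (g y); rewrite gK. Qed.

Lemma inner_K1 f x : inner f -> K1 mul x -> K1 mul (f x).
Proof. by move=> /inner_morph; apply: K1_morph. Qed.

Lemma inner_inv f x x' : inner f -> x * x' = one -> f x * f x' = one.
Proof. by move=> inn_f xx'; rewrite -(inner_morph inn_f) xx'; case: inn_f. Qed.

Lemma mulq_mulq_inv x x' : x * x' = one -> x * (x' * x') = x'.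
Proof.
move=> xx'; have [h [inn_h fact_h]] := mulq_mulq_factor Q x x'.
have {}fact_h y : x * (x' * y) = h y by rewrite fact_h xx' (mul1q Q).
have hx : h x = x by rewrite -fact_h (mulqC x') xx' (mulq1 Q).
rewrite fact_h; apply: (mulqI Q x); rewrite xx' -{1}hx.
exact: inner_inv.
Qed.

Lemma K1_mulq_mulq_sq x y : K1 mul (x * (x * (y * y))).
Proof.
have [phi [inn_phi fact_phi]] := mulq_mulq_factor Q x y.
have [y' yy'] := mulq_surj Q y one.
have [b xyb] := mulq_surj Q (x * y) x.
have [b' bb'] := mulq_surj Q b one.
have phiy' : phi y' = b by apply: (mulqI Q (x * y)); rewrite -fact_phi yy' (mulq1 Q).
have phiy : phi y = b'.
  by apply: (mulqI Q b); rewrite bb' -phiy' mulqC; apply: inner_inv.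
have [psi [inn_psi fact_psi]] := mulq_mulq_factor Q x b'.
set v := x * b' in fact_psi *; set e := psi b.
have vex : v * e = x by rewrite -fact_psi (mulqC b') bb' (mulq1 Q).
have psix : psi x = e * v.
  apply: (mulqI Q v); rewrite -fact_psi (mulqC b') -/v.
  by rewrite -{1}vex mulqC (mulqC v e).
have psixy : psi (x * y) = v.
  by apply: (mulqI Q e); rewrite -psix -{2}xyb (inner_morph inn_psi (x * y)) mulqC.
by exists v; rewrite fact_phi phiy (mulqC (x * y)) fact_psi psixy.
Qed.

Lemma K1_mul a b : K1 mul a -> K1 mul b -> K1 mul (a * b).
Proof.
move=> [x ->] [y ->]; have [h [inn_h fact_h]] := mulq_mulq_factor Q x x.
have [z <-] := inner_surj y inn_h.
rewrite -(inner_morph inn_h) -fact_h; exact: K1_mulq_mulq_sq.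
Qed.

(* [g = L_x L_x L_x' L_x'] fixes [one] by [mulq_mulq_inv], so it is inner and
   [(xx)\(yy)] is [h (x'(x'(ss)))] with [g s = y] and [h] inner. *)
Lemma K1_ldiv a b z : K1 mul a -> K1 mul b -> a * z = b -> K1 mul z.
Proof.
move=> [x ->] [y ->] xxz; have [h [inn_h fact_h]] := mulq_mulq_factor Q x x.
have [u hu] := inner_surj z inn_h; rewrite -hu; apply: inner_K1 => //.
have [x' xx'] := mulq_surj Q x one.
pose g := mul x \o mul x \o mul x' \o mul x'.
have inn_g : inner g.
  split; first by apply: mlt_comp; [apply: mlt_comp; [apply: mlt_comp|] |]; apply: mlt_L.
  by rewrite /g /= (mulq1 Q) mulq_mulq_inv.
have [s gs] := inner_surj y inn_g.
have -> : u = x' * (x' * (s * s)).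
  apply: (mulqI Q x); apply: (mulqI Q x).
  by rewrite fact_h hu xxz -gs -(inner_morph inn_g).
exact: K1_mulq_mulq_sq.
Qed.

End CommutativeALoop.

Theorem proposition5p2 (T : Type) (mul : T -> T -> T) (one : T) :
  commutative_A_loop mul one -> normal_subloop mul one (K1 mul).
Proof.
move=> cAQ; split; last by move=> f x inn_f; exact: (inner_K1 cAQ inn_f).
split; first by exists one; rewrite (mulq1 cAQ.1.1).
split; first exact: K1_mul cAQ.
split; first exact: K1_ldiv cAQ.
by move=> a b x Ka Kb; rewrite (mulqC cAQ); exact: K1_ldiv cAQ _ _ _ Ka Kb.
Qed.
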